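(* Let $f=Fe_3F^*:D\to S^3_1$ be a CMC $1$ face with Weierstrass data $(g,\omega=h\,dz)$ and holomorphic null lift $F$, let $\varphi=dg/(g^2\omega)$, and let $p$ be a non-degenerate singular point. Then, with $\xi=\sqrt{-1}\,\overline{(g_z/g)}\,\partial_z-\sqrt{-1}\,(g_z/g)\,\partial_{\bar z}$, $$\xi f(p)=2|h(p)|^2\operatorname{Im}\varphi(p)\;F(p)\begin{pmatrix}1&g(p)\\\overline{g(p)}&1\end{pmatrix}F(p)^*.$$
   Context: $S^3_1=\{X\in\mathrm{Herm}(2):\det X=-1\}$. Given a domain $D\subset\mathbb{C}$, meromorphic $g$ and holomorphic $\omega=h\,dz$ with $(1+|g|^2)^2|\omega|^2$ Riemannian and $1-|g|^2\not\equiv0$, $F:D\to SL(2,\mathbb{C})$ is holomorphic with $F^{-1}dF=\begin{pmatrix}g&-g^2\\1&-g\end{pmatrix}\omega$, and $f=Fe_3F^*$, $e_3=\mathrm{diag}(1,-1)$, $F^*=\bar F^T$. Singular points are those with $|g|=1$; non-degenerate means additionally $dg(p)\ne0$. $\xi f$ denotes the directional derivative of the matrix-valued map $f$ along $\xi$. *)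

(* Coquelicot complex numbers C, complex derivative via is_derive
   with K = C_AbsRing, real derivative with K = R_AbsRing. *)
From Stdlib Require Import Reals.
From Coquelicot Require Export Coquelicot.
Open Scope R_scope.

Record M2 := mkM2 { m11 : C; m12 : C; m21 : C; m22 : C }.

Definition M2mul (A B : M2) : M2 :=
  mkM2 (m11 A * m11 B + m12 A * m21 B)%C (m11 A * m12 B + m12 A * m22 B)%C
       (m21 A * m11 B + m22 A * m21 B)%C (m21 A * m12 B + m22 A * m22 B)%C.

Definition M2scale (c : C) (A : M2) : M2 :=
  mkM2 (c * m11 A)%C (c * m12 A)%C (c * m21 A)%C (c * m22 A)%C.

Definition M2adj (A : M2) : M2 :=
  mkM2 (Cconj (m11 A)) (Cconj (m21 A)) (Cconj (m12 A)) (Cconj (m22 A)).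

Definition M2det (A : M2) : C := (m11 A * m22 A - m12 A * m21 A)%C.

Definition e3 : M2 := mkM2 1%C 0%C 0%C (-1)%C.

Definition is_cderivM (F : C -> M2) (z : C) (L : M2) : Prop :=
  is_derive (fun w : C => m11 (F w)) z (m11 L) /\
  is_derive (fun w : C => m12 (F w)) z (m12 L) /\
  is_derive (fun w : C => m21 (F w)) z (m21 L) /\
  is_derive (fun w : C => m22 (F w)) z (m22 L).

Definition holo_on (U : C -> Prop) (f : C -> C) : Prop :=
  forall z, U z -> ex_derive f z.

(* directional derivative xi f(p) of a matrix-valued map f along the real
   direction vector v in C = R^2:  d/dt|_{t=0} f(p + t v), entrywise *)
Definition is_dir_derivM (f : C -> M2) (p v : C) (L : M2) : Prop :=
  is_derive (fun t : R => m11 (f (p + RtoC t * v)%C)) 0 (m11 L) /\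
  is_derive (fun t : R => m12 (f (p + RtoC t * v)%C)) 0 (m12 L) /\
  is_derive (fun t : R => m21 (f (p + RtoC t * v)%C)) 0 (m21 L) /\
  is_derive (fun t : R => m22 (f (p + RtoC t * v)%C)) 0 (m22 L).

Definition connectedC (D : C -> Prop) : Prop :=
  ~ exists U V : C -> Prop, open U /\ open V /\
      (forall z, D z -> U z \/ V z) /\
      (exists z, D z /\ U z) /\ (exists z, D z /\ V z) /\
      (forall z, D z -> U z -> V z -> False).

Definition domainC (D : C -> Prop) : Prop :=
  open D /\ connectedC D /\ exists z, D z.

Definition meromorphic_on (D P : C -> Prop) (g dg : C -> C) : Prop :=
  (forall z, P z -> D z) /\
  (forall a, D a -> exists eps : posreal,
      forall z, ball a eps z -> P z -> z = a) /\
  (forall z, D z -> ~ P z -> is_derive g z (dg z)) /\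
  (forall a, P a -> exists (n : nat) (r : posreal) (u : C -> C),
      (1 <= n)%nat /\ holo_on (ball a r) u /\ u a <> 0%C /\
      forall z, ball a r z -> z <> a -> g z = (u z / (z - a) ^ n)%C).

(* The computation is pointwise and uses only the ODE for F at p and |g(p)| = 1.
   The map t |-> F(p + t xi) has derivative xi F'(p) = F(p) N at t = 0, where
   N = xi h(p) A,
   A = [[g, -g^2], [1, -g]] (the Weierstrass matrix, from F^{-1} dF = A omega).
   By the product rule, the derivative of f = F e3 F^* along this line is
     F(p) (N e3 + e3 N^* ) F(p)^*.
   When |g| = 1 (a singular point) one has N e3 + e3 N^* = 2 Re(c g) B with
   c = xi h and B = [[1, g], [conj g, 1]], and an elementary computation with
   conj g = 1/g gives 2 Re(c g) = 2 |h|^2 Im phi, phi = dg/(g^2 h). *)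
From Stdlib Require Import Reals Lra.
From Coquelicot Require Import Coquelicot.
Open Scope R_scope.

Definition M2plus (A B : M2) : M2 :=
  mkM2 (m11 A + m11 B)%C (m12 A + m12 B)%C (m21 A + m21 B)%C (m22 A + m22 B)%C.

Lemma M2_ext (A B : M2) :
  m11 A = m11 B -> m12 A = m12 B -> m21 A = m21 B -> m22 A = m22 B -> A = B.
Proof. destruct A, B; simpl; intros -> -> -> ->; reflexivity. Qed.

Lemma Cconj_RtoC (r : R) : Cconj (RtoC r) = RtoC r.
Proof. apply injective_projections; simpl; ring. Qed.

Lemma Cconj_Ci : Cconj Ci = (- Ci)%C.
Proof. apply injective_projections; simpl; ring. Qed.

Lemma Ci_sq : (Ci ^ 2 = - 1)%C.
Proof. apply injective_projections; simpl; ring. Qed.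

Lemma Ci_neq_0 : Ci <> 0%C.
Proof. intros E; apply (f_equal snd) in E; simpl in E; lra. Qed.

Lemma Cconj_neq_0 (z : C) : z <> 0%C -> Cconj z <> 0%C.
Proof.
  intros Hz E; apply Hz.
  rewrite <- (Cconj_conj z), E; apply injective_projections; simpl; ring.
Qed.

Lemma unit_neq_0 (g : C) : Cmod g = 1 -> g <> 0%C.
Proof. intros Hg E; rewrite E, Cmod_0 in Hg; lra. Qed.

Lemma unit_conj_inv (g : C) : Cmod g = 1 -> Cconj g = (/ g)%C.
Proof.
  intros Hg.
  assert (Hgg : (g * Cconj g = 1)%C)
    by (rewrite <- Cmod2_conj, Hg; apply injective_projections; simpl; ring).
  rewrite <- (Cmult_1_l (/ g)), <- Hgg.
  field; apply unit_neq_0, Hg.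
Qed.

(* Distribute conjugation over ring operations, so that [ring]/[field] can
   treat conjugates of variables as new variables. *)
Ltac push_conj :=
  repeat first [ rewrite Cplus_conj | rewrite Cmult_conj | rewrite Copp_conj
               | rewrite Cminus_conj | rewrite Cconj_conj | rewrite Cconj_RtoC
               | rewrite Cconj_Ci ].

Ltac M2_ring :=
  repeat match goal with A : M2 |- _ => destruct A end;
  apply M2_ext; cbn [m11 m12 m21 m22 M2mul M2plus M2scale M2adj e3]; push_conj; ring.

Lemma M2scale_mul_r (c : C) (X Y : M2) :
  M2scale c (M2mul X Y) = M2mul X (M2scale c Y).
Proof. M2_ring. Qed.

Lemma M2scale_scale (c d : C) (X : M2) :
  M2scale c (M2scale d X) = M2scale (c * d) X.
Proof. M2_ring. Qed.

Lemma M2mul_scale_mid (c : C) (X B Y : M2) :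
  M2mul X (M2mul (M2scale c B) Y) = M2scale c (M2mul X (M2mul B Y)).
Proof. M2_ring. Qed.

Lemma hermitian_variation (X N K : M2) :
  M2plus (M2mul (M2mul X N) (M2mul K (M2adj X)))
         (M2mul X (M2mul K (M2adj (M2mul X N))))
  = M2mul X (M2mul (M2plus (M2mul N K) (M2mul K (M2adj N))) (M2adj X)).
Proof. M2_ring. Qed.

(* The matrix A with F^{-1} dF = A omega. *)
Definition weierstrass_matrix (g : C) : M2 := mkM2 g (- (g * g))%C 1%C (- g)%C.

Lemma weierstrass_variation_unit (g c : C) :
  Cmod g = 1 ->
  M2plus (M2mul (M2scale c (weierstrass_matrix g)) e3)
         (M2mul e3 (M2adj (M2scale c (weierstrass_matrix g))))
  = M2scale (RtoC (2 * Re (c * g))) (mkM2 1%C g (Cconj g) 1%C).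
Proof.
  intros Hg.
  rewrite RtoC_mult, re_alt.
  apply M2_ext; cbn [m11 m12 m21 m22 M2mul M2plus M2scale M2adj e3 weierstrass_matrix];
    push_conj; rewrite (unit_conj_inv g Hg); field; apply unit_neq_0, Hg.
Qed.

(* For c = xi h with xi = i conj(dg/g) and |g| = 1, the real factor above is
   2 |h|^2 Im phi, phi = dg / (g^2 h).  (Both sides vanish when h = 0.) *)
Lemma singular_coefficient (g dg h : C) :
  Cmod g = 1 ->
  2 * Re (Ci * Cconj (dg / g) * h * g) = 2 * Cmod h ^ 2 * Im (dg / (g * g * h)).
Proof.
  intros Hg.
  pose proof (unit_neq_0 g Hg) as Hg0.
  destruct (Ceq_dec h 0) as [Hh0 | Hh0].
  - subst h. rewrite Cmod_0, Cmult_0_r, Cmult_0_l. simpl. ring.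
  - apply RtoC_inj.
    rewrite !RtoC_mult, Cmod2_conj, re_alt, im_alt.
    push_conj.
    rewrite !Cdiv_conj by (repeat apply Cmult_neq_0; auto).
    push_conj. rewrite (unit_conj_inv g Hg).
    field_simplify_eq; [rewrite Ci_sq; ring |].
    repeat split; auto using Cconj_neq_0, Ci_neq_0.
Qed.

Lemma norm_C_R (w : C) : @norm R_AbsRing C_R_NormedModule w = Cmod w.
Proof.
  unfold norm; simpl. unfold prod_norm, Cmod; simpl.
  change (@norm R_AbsRing R_NormedModule) with Rabs.
  rewrite !Rmult_1_r, <- !Rabs_mult, !Rabs_right; try reflexivity;
    apply Rle_ge, Rle_0_sqr.
Qed.

Lemma scal_C_R (r : R) (w : C) : @scal R_Ring C_R_ModuleSpace r w = (RtoC r * w)%C.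
Proof.
  destruct w; unfold scal; simpl; unfold prod_scal, scal; simpl; unfold mult; simpl.
  unfold Cmult, RtoC; simpl. f_equal; ring.
Qed.

Lemma line_origin (z v : C) : (z + RtoC 0 * v = z)%C.
Proof. apply injective_projections; simpl; ring. Qed.

Lemma line_continuous (z v : C) :
  filterlim (fun t : R => (z + RtoC t * v)%C) (locally 0)
            (@locally (AbsRing_UniformSpace C_AbsRing) z).
Proof.
  apply (proj2 (@filterlim_locally R (AbsRing_UniformSpace C_AbsRing) (locally 0) _ _ z)).
  intros e.
  assert (Hv : 0 < Cmod v + 1) by (pose proof (Cmod_ge_0 v); lra).
  assert (He : 0 < e / (Cmod v + 1)) by (apply Rdiv_lt_0_compat; [apply cond_pos | lra]).
  exists (mkposreal _ He). intros t Ht.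
  change (Rabs (t - 0) < e / (Cmod v + 1)) in Ht. rewrite Rminus_0_r in Ht.
  change (Cmod ((z + t * v) - z) < e)%C.
  replace ((z + t * v) - z)%C with (RtoC t * v)%C by ring.
  rewrite Cmod_mult, Cmod_R.
  apply Rle_lt_trans with (Rabs t * (Cmod v + 1)).
  - apply Rmult_le_compat_l; [apply Rabs_pos | lra].
  - apply Rmult_lt_reg_r with (/ (Cmod v + 1)); [apply Rinv_0_lt_compat; lra |].
    rewrite Rmult_assoc, Rinv_r, Rmult_1_r by lra. exact Ht.
Qed.

Lemma is_derive_along_line (f : C -> C) (z l v : C) :
  @is_derive C_AbsRing C_NormedModule f z l ->
  @is_derive R_AbsRing C_R_NormedModule (fun t : R => f (z + RtoC t * v)%C) 0 (v * l)%C.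
Proof.
  intros [_ Hdiff].
  split; [apply is_linear_scal_l |].
  intros x Hx.
  apply (@is_filter_lim_locally_unique R_AbsRing (AbsRing_NormedModule R_AbsRing)) in Hx.
  subst x.
  assert (Hv : 0 < Cmod v + 1) by (pose proof (Cmod_ge_0 v); lra).
  intros eps.
  pose proof (domin_comp _ _ _ _ _ (line_continuous z v) (Hdiff z (fun P HP => HP))
                (mkposreal _ (Rdiv_lt_0_compat _ _ (cond_pos eps) Hv))) as Hsmall.
  revert Hsmall; apply filter_imp; intros t Ht; simpl in Ht.
  rewrite norm_C_R, scal_C_R, line_origin.
  change (Cmod ((f (z + t * v) - f z) - (z + t * v - z) * l)
          <= eps / (Cmod v + 1) * Cmod (z + t * v - z))%C in Ht.
  change (Cmod ((f (z + t * v) - f z) - RtoC (t - 0) * (v * l)) <= eps * Rabs (t - 0))%C.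
  rewrite Rminus_0_r.
  replace ((z + t * v) - z)%C with (RtoC t * v)%C in Ht by ring.
  replace (RtoC t * (v * l))%C with ((RtoC t * v) * l)%C by ring.
  eapply Rle_trans; [exact Ht |].
  rewrite Cmod_mult, Cmod_R.
  assert (Hratio : eps / (Cmod v + 1) * Cmod v <= eps).
  { assert (Hpos : 0 < eps / (Cmod v + 1)) by (apply Rdiv_lt_0_compat; [apply cond_pos | lra]).
    replace (eps / (Cmod v + 1) * Cmod v) with (eps - eps / (Cmod v + 1)) by (field; lra).
    lra. }
  replace (eps / (Cmod v + 1) * (Rabs t * Cmod v))
    with (eps / (Cmod v + 1) * Cmod v * Rabs t) by ring.
  apply Rmult_le_compat_r; [apply Rabs_pos | exact Hratio].
Qed.

Notation is_derive_RC := (@is_derive R_AbsRing C_R_NormedModule).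

Lemma is_derive_RC_iff (u : R -> C) (x : R) (l : C) :
  is_derive_RC u x l <->
  is_derive (fun t => fst (u t)) x (fst l) /\ is_derive (fun t => snd (u t)) x (snd l).
Proof.
  unfold is_derive; split.
  - intros H; split.
    + apply filterdiff_ext_lin with (fun y => fst (@scal R_Ring C_R_ModuleSpace y l));
        [| reflexivity].
      apply (@filterdiff_comp R_AbsRing R_NormedModule C_R_NormedModule R_NormedModule
               _ _ u (fun q : C_R_NormedModule => fst q)); [exact H |].
      apply filterdiff_linear, (@is_linear_fst R_AbsRing R_NormedModule R_NormedModule).
    + apply filterdiff_ext_lin with (fun y => snd (@scal R_Ring C_R_ModuleSpace y l));
        [| reflexivity].
      apply (@filterdiff_comp R_AbsRing R_NormedModule C_R_NormedModule R_NormedModule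
               _ _ u (fun q : C_R_NormedModule => snd q)); [exact H |].
      apply filterdiff_linear, (@is_linear_snd R_AbsRing R_NormedModule R_NormedModule).
  - intros [Ha Hb].
    apply filterdiff_ext with (fun y => (fst (u y), snd (u y))).
    { intros y; destruct (u y); reflexivity. }
    apply filterdiff_ext_lin with
      (fun y => (@scal R_Ring R_ModuleSpace y (fst l), @scal R_Ring R_ModuleSpace y (snd l))).
    2: { intros y; destruct l; reflexivity. }
    apply (@filterdiff_comp'_2 R_AbsRing R_NormedModule R_NormedModule R_NormedModule
             C_R_NormedModule (fun t => fst (u t)) (fun t => snd (u t)) (fun a b => (a, b))
             x _ _ (fun a b => (a, b)) Ha Hb).
    apply filterdiff_ext_lin with
      (fun q : prod_NormedModule R_AbsRing R_NormedModule R_NormedModule => q);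
      [| intros [? ?]; reflexivity].
    apply filterdiff_ext with
      (fun q : prod_NormedModule R_AbsRing R_NormedModule R_NormedModule => q);
      [intros [? ?]; reflexivity |].
    apply filterdiff_id.
Qed.

Lemma is_derive_RC_value (u : R -> C) (x : R) (l1 l2 : C) :
  is_derive_RC u x l1 -> l1 = l2 -> is_derive_RC u x l2.
Proof. intros H <-; exact H. Qed.

Lemma is_derive_R_value (u : R -> R) (x l1 l2 : R) :
  is_derive u x l1 -> l1 = l2 -> is_derive u x l2.
Proof. intros H <-; exact H. Qed.

Lemma is_derive_RC_const (c : C) (x : R) : is_derive_RC (fun _ => c) x (RtoC 0).
Proof.
  apply is_derive_RC_iff; split; simpl; apply (is_derive_const (V := R_NormedModule)).
Qed.

Lemma is_derive_RC_plus (u w : R -> C) (x : R) (du dw : C) :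
  is_derive_RC u x du -> is_derive_RC w x dw ->
  is_derive_RC (fun t => u t + w t)%C x (du + dw)%C.
Proof.
  intros [Hu1 Hu2]%is_derive_RC_iff [Hw1 Hw2]%is_derive_RC_iff.
  apply is_derive_RC_iff; split; simpl.
  - apply (is_derive_plus _ _ _ _ _ Hu1 Hw1).
  - apply (is_derive_plus _ _ _ _ _ Hu2 Hw2).
Qed.

Lemma is_derive_RC_mult (u w : R -> C) (x : R) (du dw : C) :
  is_derive_RC u x du -> is_derive_RC w x dw ->
  is_derive_RC (fun t => u t * w t)%C x (du * w x + u x * dw)%C.
Proof.
  intros [Hu1 Hu2]%is_derive_RC_iff [Hw1 Hw2]%is_derive_RC_iff.
  apply is_derive_RC_iff; split; simpl.
  - eapply is_derive_R_value.
    + apply (is_derive_minus _ _ _ _ _ (is_derive_mult _ _ _ _ _ Hu1 Hw1 Rmult_comm)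
                                        (is_derive_mult _ _ _ _ _ Hu2 Hw2 Rmult_comm)).
    + unfold minus, plus, opp, mult; simpl; ring.
  - eapply is_derive_R_value.
    + apply (is_derive_plus _ _ _ _ _ (is_derive_mult _ _ _ _ _ Hu1 Hw2 Rmult_comm)
                                       (is_derive_mult _ _ _ _ _ Hu2 Hw1 Rmult_comm)).
    + unfold plus, mult; simpl; ring.
Qed.

(* Conjugation is real linear, hence commutes with real derivatives. *)
Lemma is_derive_RC_conj (u : R -> C) (x : R) (du : C) :
  is_derive_RC u x du -> is_derive_RC (fun t => Cconj (u t)) x (Cconj du).
Proof.
  intros [Hu1 Hu2]%is_derive_RC_iff.
  apply is_derive_RC_iff; split; simpl.
  - exact Hu1.
  - apply (is_derive_opp _ _ _ Hu2).
Qed.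

Definition is_derive_RM (X : R -> M2) (x : R) (L : M2) : Prop :=
  is_derive_RC (fun t => m11 (X t)) x (m11 L) /\ is_derive_RC (fun t => m12 (X t)) x (m12 L) /\
  is_derive_RC (fun t => m21 (X t)) x (m21 L) /\ is_derive_RC (fun t => m22 (X t)) x (m22 L).

Lemma is_dir_derivM_line (f : C -> M2) (p v : C) (L : M2) :
  is_derive_RM (fun t => f (p + RtoC t * v)%C) 0 L -> is_dir_derivM f p v L.
Proof. intros H; exact H. Qed.

Lemma is_derive_RM_line (F : C -> M2) (z v : C) (L : M2) :
  is_cderivM F z L -> is_derive_RM (fun t => F (z + RtoC t * v)%C) 0 (M2scale v L).
Proof.
  intros (H11 & H12 & H21 & H22).
  split; [| split; [| split]];
    apply (is_derive_along_line (fun w => _ (F w))); assumption.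
Qed.

Lemma is_derive_RM_mul (X Y : R -> M2) (x : R) (X' Y' : M2) :
  is_derive_RM X x X' -> is_derive_RM Y x Y' ->
  is_derive_RM (fun t => M2mul (X t) (Y t)) x (M2plus (M2mul X' (Y x)) (M2mul (X x) Y')).
Proof.
  intros (HX11 & HX12 & HX21 & HX22) (HY11 & HY12 & HY21 & HY22).
  split; [| split; [| split]]; cbn [m11 m12 m21 m22 M2mul M2plus];
    (eapply is_derive_RC_value;
      [apply is_derive_RC_plus; apply is_derive_RC_mult; eassumption | cbv beta; ring]).
Qed.

Lemma is_derive_RM_mul_const_l (K : M2) (Y : R -> M2) (x : R) (Y' : M2) :
  is_derive_RM Y x Y' -> is_derive_RM (fun t => M2mul K (Y t)) x (M2mul K Y').
Proof.
  intros (HY11 & HY12 & HY21 & HY22).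
  split; [| split; [| split]]; cbn [m11 m12 m21 m22 M2mul];
    (eapply is_derive_RC_value;
      [apply is_derive_RC_plus;
         (apply is_derive_RC_mult; [apply is_derive_RC_const | eassumption])
      | cbv beta; ring]).
Qed.

Lemma is_derive_RM_adj (X : R -> M2) (x : R) (X' : M2) :
  is_derive_RM X x X' -> is_derive_RM (fun t => M2adj (X t)) x (M2adj X').
Proof.
  intros (H11 & H12 & H21 & H22).
  split; [| split; [| split]]; cbn [m11 m12 m21 m22 M2adj].
  - exact (is_derive_RC_conj _ _ _ H11).
  - exact (is_derive_RC_conj _ _ _ H21).
  - exact (is_derive_RC_conj _ _ _ H12).
  - exact (is_derive_RC_conj _ _ _ H22).
Qed.

Lemma is_derive_RM_hermitian (K : M2) (X : R -> M2) (x : R) (X' : M2) :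
  is_derive_RM X x X' ->
  is_derive_RM (fun t => M2mul (X t) (M2mul K (M2adj (X t)))) x
    (M2plus (M2mul X' (M2mul K (M2adj (X x)))) (M2mul (X x) (M2mul K (M2adj X')))).
Proof.
  intros HX.
  apply (is_derive_RM_mul X (fun t => M2mul K (M2adj (X t)))); [exact HX |].
  apply is_derive_RM_mul_const_l, is_derive_RM_adj, HX.
Qed.

Theorem lemma4p9
  (D P : C -> Prop) (g dg h : C -> C) (F : C -> M2) (p : C)
  (HD : domainC D)
  (Hg : meromorphic_on D P g dg)
  (Hh : holo_on D h)
  (Hmetric : exists rho : C -> R,
      (forall z, D z -> continuous rho z /\ 0 < rho z) /\
      (forall z, D z -> ~ P z ->
         rho z = (1 + Cmod (g z) ^ 2) ^ 2 * Cmod (h z) ^ 2))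
  (Hnondeg : exists z, D z /\ ~ P z /\ Cmod (g z) <> 1)
  (HFhol : forall z, D z -> exists L, is_cderivM F z L)
  (HFdet : forall z, D z -> M2det (F z) = 1%C)
  (HFode : forall z, D z -> ~ P z ->
      is_cderivM F z
        (M2mul (F z) (M2scale (h z)
           (mkM2 (g z) (- (g z * g z))%C 1%C (- g z)%C))))
  (Hp : D p) (HpP : ~ P p) (Hsing : Cmod (g p) = 1) (Hdg : dg p <> 0%C) :
  let f := fun z => M2mul (F z) (M2mul e3 (M2adj (F z))) in
  let phi := (dg p / (g p * g p * h p))%C in
  let xi := (Ci * Cconj (dg p / g p))%C in
  is_dir_derivM f p xi
    (M2scale (RtoC (2 * Cmod (h p) ^ 2 * Im phi))
       (M2mul (F p) (M2mul (mkM2 1%C (g p) (Cconj (g p)) 1%C) (M2adj (F p))))).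
Proof.
  intros f phi xi.
  apply is_dir_derivM_line.
  pose proof (is_derive_RM_line F p xi _ (HFode p Hp HpP)) as HF.
  pose proof (is_derive_RM_hermitian e3 _ _ _ HF) as Hf.
  cbv beta in Hf; rewrite line_origin in Hf.
  fold (weierstrass_matrix (g p)) in Hf.
  rewrite M2scale_mul_r, M2scale_scale, hermitian_variation,
    (weierstrass_variation_unit _ _ Hsing), M2mul_scale_mid in Hf.
  unfold xi in Hf; rewrite singular_coefficient in Hf by exact Hsing.
  exact Hf.
Qed.
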